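(* For every integer $n\ge 3$, the Kemeny's constant of $M_n$ is $$Kc(M_n)=\frac{n^{2}-1}{4}+\frac{\sqrt{3}\,n}{2}\cdot\frac{p^{n}-q^{n}}{p^{n}+q^{n}+2}.$$
   Context: For an integer $n\ge 3$, the Möbius polyomino network $M_n$ is the graph with vertex set $\{1,\dots,n\}\cup\{1',\dots,n'\}$ whose edges are $\{i,i+1\}$ and $\{i',(i+1)'\}$ for $1\le i\le n-1$, $\{i,i'\}$ for $1\le i\le n$, and the two edges $\{1,n'\}$ and $\{1',n\}$; it is $3$-regular with $2n$ vertices and $3n$ edges. $p=2+\sqrt3$, $q=2-\sqrt3$. For a connected graph $G$ on $N$ vertices, its normalized Laplacian is $\mathcal L(G)=D^{-1/2}(D-A)D^{-1/2}$ ($D$ the degree matrix, $A$ the adjacency matrix), with eigenvalues $0=\lambda_1<\lambda_2\le\dots\le\lambda_N$, and Kemeny's constant is $Kc(G)=\sum_{i=2}^{N}1/\lambda_i$. *)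

From HB Require Import structures.
From mathcomp Require Import all_boot all_order all_algebra.
Set Implicit Arguments. Unset Strict Implicit. Unset Printing Implicit Defensive.
Import Order.TTheory GRing.Theory Num.Theory.
Local Open Scope ring_scope.

(* Vertex labelling of M_n on 'I_(n + n) (0-based):
   unprimed vertex i (1 <= i <= n)  |-> index i - 1
   primed vertex i' (1 <= i <= n)   |-> index n + i - 1 *)

(* The five edge families of M_n, listed as ordered pairs (x, y):
   {i, i+1} (1 <= i <= n-1); {i', (i+1)'} (1 <= i <= n-1); {i, i'} (1 <= i <= n);
   {1, n'}; {1', n}. *)
Definition mobius_edge (n x y : nat) : bool :=
     ((x.+1 == y) && (y < n)%N)
  || ((n <= x)%N && (x.+1 == y) && (y < n + n)%N)
  || ((x < n)%N && (y == x + n)%N)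
  || ((x == 0%N) && (y == (n + n).-1))
  || ((x == n) && (y == n.-1)).

Definition mobius_adj (R : nzRingType) (n : nat) : 'M[R]_(n + n) :=
  \matrix_(u, v) (if mobius_edge n u v || mobius_edge n v u then 1 else 0).

Definition deg_mx (R : nzRingType) (N : nat) (A : 'M[R]_N) : 'M[R]_N :=
  diag_mx (\row_u \sum_v A u v).

Definition deg_inv_sqrt_mx (R : rcfType) (N : nat) (A : 'M[R]_N) : 'M[R]_N :=
  diag_mx (\row_u (Num.sqrt (\sum_v A u v))^-1).

Definition norm_laplacian (R : rcfType) (N : nat) (A : 'M[R]_N) : 'M[R]_N :=
  deg_inv_sqrt_mx A *m (deg_mx A - A) *m deg_inv_sqrt_mx A.

Definition is_sorted_spectrum (R : rcfType) (N : nat) (M : 'M[R]_N) (s : seq R) : Prop :=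
  sorted <=%R s /\ char_poly M = \prod_(x <- s) ('X - x%:P).

(* Kemeny's constant sum_{i=2}^N 1/lambda_i for the sorted spectrum s. *)
Definition kemeny_of_spectrum (R : rcfType) (s : seq R) : R :=
  \sum_(1 <= i < size s) (s`_i)^-1.

From HB Require Import structures.
From mathcomp Require Import all_boot all_order all_algebra all_field.
From mathcomp Require Import zify ring lra complex.
From mathcomp Require cyclic.
Import Order.TTheory GRing.Theory Num.Theory.
Local Open Scope ring_scope.

(* With the vertices labelled 0 .. 2n-1 (i |-> i - 1, i' |-> n + i - 1), M_n
   is the circulant graph on Z/2nZ in which u is adjacent to u + 1, u - 1 and
   u + n.  It is 3-regular, so its normalized Laplacian is L = I - A/3.

   A circulant matrix is diagonalized by the Fourier matrix (z^(ku)) of a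
   primitive 2n-th root of unity z, here taken in R[i]: mode k has eigenvalue
   z^k + z^-k + (-1)^k for A, so the spectrum of L is the multiset of the real
   numbers mu_k = 1 - (2 Re z^k + (-1)^k)/3 (k < 2n), all nonnegative, with
   mu_0 = 0.  A sorted spectrum therefore starts with 0 and Kemeny's constant
   is the sum of the 1/mu_k over k < 2n (with 0^-1 = 0).

   This sum is split by the parity of k.  Even modes k = 2j are indexed by the
   n-th roots of unity x = z^(2j) and contribute sum_(x <> 1) 3/|1 - x|^2 =
   (n^2 - 1)/4, computed through Parseval's identity for S(x) = sum_k k x^k.
   Odd modes are indexed by the roots y of y^n = -1; partial fractions with
   the roots p, q = 2 +- sqrt 3 of X^2 - 4X + 1 reduce them to the sums
   sum_y 1/(a - y) = n a^(n-1)/(a^n + 1), which give the second term. *)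

Definition mobius_next (n u : nat) : nat := if u == (n + n).-1 then 0%N else u.+1.
Definition mobius_prev (n u : nat) : nat := if u == 0%N then (n + n).-1 else u.-1.
Definition mobius_antipode (n u : nat) : nat := if (u < n)%N then (u + n)%N else (u - n)%N.

Lemma sum_mul_indicator (R : nzSemiRingType) N (F : nat -> R) (w : nat) :
  (w < N)%N -> \sum_(v < N) F v * (v == w :> nat)%:R = F w.
Proof.
move=> lt_wN; rewrite (bigD1 (Ordinal lt_wN)) //= eqxx mulr1 big1 ?addr0 //.
by move=> v; rewrite -val_eqE /= => /negbTE ->; rewrite mulr0.
Qed.

Lemma mobius_adj_sym (R : nzRingType) n (u v : 'I_(n + n)) :
  mobius_adj R n u v = mobius_adj R n v u.
Proof. by rewrite !mxE orbC. Qed.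

Section MobiusCirculant.

Context {n : nat} (n_ge3 : (3 <= n)%N).

Lemma mobius_neighbours_mod {u : nat} : (u < n + n)%N ->
  [/\ mobius_next n u = ((u + 1) %% (n + n))%N,
      mobius_prev n u = ((u + (n + n).-1) %% (n + n))%N
    & mobius_antipode n u = ((u + n) %% (n + n))%N].
Proof.
move=> lt_u; rewrite /mobius_next /mobius_prev /mobius_antipode; split.
- case: (u =P (n + n).-1) => [->|ne_u]; first by rewrite addn1 prednK ?modnn //; lia.
  by rewrite modn_small //; lia.
- case: (u =P 0%N) => [->|ne_u]; first by rewrite add0n modn_small //; lia.
  have -> : (u + (n + n).-1 = u.-1 + (n + n))%N by lia.
  by rewrite modnDr modn_small //; lia.
- case: (ltnP u n) => [lt_un|le_nu]; first by rewrite modn_small //; lia.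
  have -> : (u + n = (u - n) + (n + n))%N by lia.
  by rewrite modnDr modn_small //; lia.
Qed.

Lemma mobius_neighbours_lt {u : nat} : (u < n + n)%N ->
  [/\ (mobius_next n u < n + n)%N, (mobius_prev n u < n + n)%N
    & (mobius_antipode n u < n + n)%N].
Proof.
move=> lt_u; have nn_gt0 : (0 < n + n)%N by lia.
by have [-> -> ->] := mobius_neighbours_mod lt_u; rewrite !ltn_pmod.
Qed.

Lemma mobius_neighbours_distinct {u : nat} : (u < n + n)%N ->
  [/\ mobius_next n u != mobius_prev n u, mobius_next n u != mobius_antipode n u
    & mobius_prev n u != mobius_antipode n u].
Proof.
move=> lt_u; rewrite /mobius_next /mobius_prev /mobius_antipode.
case: (u =P (n + n).-1) => ?; case: (u =P 0%N) => ?; case: (ltnP u n) => ?;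
  by split; lia.
Qed.

Lemma mobius_edgeE (u v : nat) : (u < n + n)%N -> (v < n + n)%N ->
  (mobius_edge n u v || mobius_edge n v u) =
  [|| v == mobius_next n u, v == mobius_prev n u | v == mobius_antipode n u].
Proof.
rewrite /mobius_edge /mobius_next /mobius_prev /mobius_antipode.
move=> ? ?; case: (u =P (n + n).-1) => ?; case: (u =P 0%N) => ?;
  by case: (ltnP u n) => ?; apply/idP/idP; lia.
Qed.

Lemma mobius_adjE (R : nzRingType) (u v : 'I_(n + n)) :
  mobius_adj R n v u = (v == mobius_next n u :> nat)%:R
    + (v == mobius_prev n u :> nat)%:R + (v == mobius_antipode n u :> nat)%:R.
Proof.
rewrite mxE orbC mobius_edgeE //.
have [ne_np ne_na np_na] := mobius_neighbours_distinct (ltn_ord u).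
case: (v =P mobius_next n u :> nat) => [->|_] /=.
  by rewrite (negbTE ne_np) (negbTE ne_na) !addr0.
case: (v =P mobius_prev n u :> nat) => [->|_] /=.
  by rewrite (negbTE np_na) add0r addr0.
by case: (v =P mobius_antipode n u :> nat); rewrite !add0r.
Qed.

Lemma mobius_adj_sum {R : nzRingType} (F : nat -> R) (u : 'I_(n + n)) :
  \sum_(v < n + n) F v * mobius_adj R n v u =
  F (mobius_next n u) + F (mobius_prev n u) + F (mobius_antipode n u).
Proof.
have [lt_next lt_prev lt_opp] := mobius_neighbours_lt (ltn_ord u).
under eq_bigr do rewrite mobius_adjE !mulrDr.
by rewrite !big_split /= !sum_mul_indicator.
Qed.

Lemma mobius_adj_rowsum (R : nzRingType) (u : 'I_(n + n)) :
  \sum_v mobius_adj R n u v = 3%:R.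
Proof.
under eq_bigr => v _ do rewrite mobius_adj_sym -[mobius_adj R n v u]mul1r.
by rewrite (@mobius_adj_sum _ (fun=> 1)) -[3%N]/(1 + 1 + 1)%N !natrD.
Qed.

End MobiusCirculant.

Lemma norm_laplacian_regular (R : rcfType) N (A : 'M[R]_N) (d : R) :
  0 < d -> (forall u, \sum_v A u v = d) -> norm_laplacian A = 1%:M - d^-1 *: A.
Proof.
move=> d_gt0 rowsumA; rewrite /norm_laplacian.
have -> : deg_mx A = d%:M by apply/matrixP => i j; rewrite !mxE rowsumA.
have -> : deg_inv_sqrt_mx A = (Num.sqrt d)^-1%:M.
  by apply/matrixP => i j; rewrite !mxE rowsumA.
rewrite mul_scalar_mx mul_mx_scalar scalerA -invfM -expr2.
rewrite sqr_sqrtr ?ltW // scalerBr scale_scalar_mx mulVf ?gt_eqF //.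
Qed.

Lemma norm_laplacian_mobius (R : rcfType) n : (3 <= n)%N ->
  norm_laplacian (mobius_adj R n) = 1%:M - 3%:R^-1 *: mobius_adj R n.
Proof.
move=> n_ge3; apply: norm_laplacian_regular; first by rewrite ltr0n.
exact: mobius_adj_rowsum.
Qed.

Lemma char_poly_diagonalizable (F : fieldType) N (M V : 'M[F]_N) (d : 'rV[F]_N) :
  V \in unitmx -> V *m M = diag_mx d *m V ->
  char_poly M = \prod_(i < N) ('X - (d 0 i)%:P).
Proof.
move=> V_unit VM.
have -> : \prod_(i < N) ('X - (d 0 i)%:P) = char_poly (diag_mx d).
  rewrite char_poly_trig ?diag_mx_is_trig //.
  by apply: eq_bigr => i _; rewrite mxE eqxx mulr1n.
have /(congr1 determinant) : map_mx polyC V *m char_poly_mx M =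
    char_poly_mx (diag_mx d) *m map_mx polyC V.
  by rewrite /char_poly_mx mulmxBr mulmxBl -!map_mxM VM mul_mx_scalar mul_scalar_mx.
rewrite !det_mulmx det_map_mx /char_poly [in X in _ = X]mulrC => /mulfI; apply.
by rewrite polyC_eq0 -unitfE -unitmxE.
Qed.

Definition fourier_mx {F : nzRingType} N (z : F) : 'M[F]_N :=
  \matrix_(k, u) z ^+ (k * u).

(* For a primitive N-th root z it is a Vandermonde matrix on the N distinct
   powers of z, hence invertible. *)
Lemma fourier_mx_unit (F : fieldType) N (z : F) :
  N.-primitive_root z -> fourier_mx N z \in unitmx.
Proof.
move=> prim_z.
have -> : fourier_mx N z = Vandermonde N (\row_u z ^+ u).
  by apply/matrixP => k u; rewrite !mxE -exprM mulnC.
rewrite unitmxE unitfE det_Vandermonde prodf_seq_neq0.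
apply/allP => i _; rewrite prodf_seq_neq0; apply/allP => j _.
apply/implyP => lt_ij; rewrite !mxE subr_eq0 (eq_prim_root_expr prim_z).
by rewrite !modn_small // neq_ltn lt_ij orbT.
Qed.

(* The symbol of the circulant matrix A(M_n): its eigenvalue on Fourier mode
   k is z^k + z^(-k) + z^(kn), written without inverses. *)
Definition mobius_symbol {F : nzRingType} n (z : F) (k : nat) : F :=
  z ^+ k + z ^+ (k * (n + n).-1) + z ^+ (k * n).

Lemma fourier_mobius_adj (F : comNzRingType) n (z : F) : (3 <= n)%N ->
  z ^+ (n + n) = 1 ->
  fourier_mx (n + n) z *m mobius_adj F n =
  diag_mx (\row_k mobius_symbol n z k) *m fourier_mx (n + n) z.
Proof.
move=> n_ge3 z_root; apply/matrixP => k u; rewrite mul_diag_mx !mxE.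
under eq_bigr => v _ do rewrite mxE.
rewrite (mobius_adj_sum n_ge3 (fun v => z ^+ (k * v))) /mobius_symbol.
have zk_root : (z ^+ k) ^+ (n + n) = 1 by rewrite -exprM mulnC exprM z_root expr1n.
have [-> -> ->] := mobius_neighbours_mod n_ge3 (ltn_ord u).
rewrite !exprM !(expr_mod _ zk_root) !exprD; ring.
Qed.

Lemma prim_root_exists (C : numClosedFieldType) m : (0 < m)%N ->
  exists z : C, m.-primitive_root z.
Proof.
move=> m_gt0; have [r Dp] := closed_field_poly_normal ('X^m - 1 : {poly C}).
rewrite (monicP _) ?monicXnsubC // scale1r in Dp.
have r_roots : all m.-unity_root r by apply/allP=> z; rewrite -root_prod_XsubC -Dp.
have size_r : (m < (size r).+1)%N.
  by rewrite -(size_prod_XsubC r id) -Dp size_XnsubC.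
have [|z] := hasP (cyclic.has_prim_root m_gt0 r_roots _ size_r); last by exists z.
by rewrite -separable_prod_XsubC -Dp separable_Xn_sub_1 // pnatr_eq0 -lt0n.
Qed.

Lemma root_unity_neq0 {F : nzRingType} {m : nat} {x : F} :
  (0 < m)%N -> x ^+ m = 1 -> x != 0.
Proof.
move=> m_gt0 x_root; apply: contra_eq_neq x_root => ->.
by rewrite expr0n gtn_eqF // eq_sym oner_neq0.
Qed.

Lemma prim_root_half {F : idomainType} {n : nat} {z : F} : (0 < n)%N ->
  (n + n).-primitive_root z -> z ^+ n = -1.
Proof.
move=> n_gt0 prim_z; have : (z ^+ n) ^+ 2 == 1.
  by rewrite -exprM muln2 -addnn prim_expr_order.
rewrite sqrf_eq1 => /orP [zn1|/eqP //].
move: zn1; rewrite -(expr0 z) (eq_prim_root_expr prim_z) mod0n modn_small.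
  by move=> /eqP; lia.
lia.
Qed.

Lemma mobius_symbolE (F : fieldType) n (z : F) k : (0 < n)%N ->
  (n + n).-primitive_root z -> mobius_symbol n z k = z ^+ k + (z ^+ k)^-1 + (-1) ^+ k.
Proof.
move=> n_gt0 prim_z.
have x_root : (z ^+ k) ^+ (n + n) = 1.
  by rewrite -exprM mulnC exprM (prim_expr_order prim_z) expr1n.
have x_neq0 : z ^+ k != 0 by apply: root_unity_neq0 x_root; lia.
have x_inv : (z ^+ k) ^+ (n + n).-1 = (z ^+ k)^-1.
  apply: (mulfI x_neq0); rewrite -exprS prednK ?x_root ?divff //; lia.
by rewrite /mobius_symbol exprM x_inv mulnC exprM (prim_root_half n_gt0 prim_z).
Qed.

Section ComplexRootsOfUnity.

Context {R : rcfType}.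

Lemma root_unity_mulJ {x : R[i]} {m : nat} : (0 < m)%N -> x ^+ m = 1 -> x * x^* = 1.
Proof.
move=> m_gt0 x_root; have xJ_ge0 := mulcJ_ge0 x.
have : (x * x^*) ^+ m == 1 by rewrite exprMn -rmorphXn x_root rmorph1 mulr1.
by rewrite pexpr_eq1 // => /eqP.
Qed.

Lemma root_unity_conj {x : R[i]} {m : nat} : (0 < m)%N -> x ^+ m = 1 -> x^* = x^-1.
Proof.
move=> m_gt0 x_root; apply: (mulfI (root_unity_neq0 m_gt0 x_root)).
by rewrite (root_unity_mulJ m_gt0 x_root) divff ?(root_unity_neq0 m_gt0 x_root).
Qed.

Lemma root_unity_Re_le1 {x : R[i]} {m : nat} : (0 < m)%N -> x ^+ m = 1 -> complex.Re x <= 1.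
Proof.
move=> m_gt0 x_root; have := root_unity_mulJ m_gt0 x_root.
by case: x {x_root} => a b [/= normx _]; nra.
Qed.

End ComplexRootsOfUnity.

Definition mobius_eigenvalue {R : rcfType} (z : R[i]) (k : nat) : R :=
  1 - 3%:R^-1 * (2%:R * complex.Re (z ^+ k) + (-1) ^+ k).

Lemma mobius_eigenvalue0 {R : rcfType} (z : R[i]) : mobius_eigenvalue z 0 = 0.
Proof. by rewrite /mobius_eigenvalue expr0 /=; field. Qed.

Section MobiusEigenvalue.

Context {R : rcfType} {m : nat} (m_gt0 : (0 < m)%N) {z : R[i]} (z_root : z ^+ m = 1).

Let zk_root (k : nat) : (z ^+ k) ^+ m = 1.
Proof. by rewrite -exprM mulnC exprM z_root expr1n. Qed.

(* As z^-k is the conjugate of z^k, the eigenvalue 1 - (z^k + z^-k + (-1)^k)/3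
   of L on mode k is real ... *)
Lemma mobius_eigenvalueE k :
  (mobius_eigenvalue z k)%:C%C = 1 - 3%:R^-1 * (z ^+ k + (z ^+ k)^-1 + (-1) ^+ k).
Proof.
rewrite -(root_unity_conj m_gt0 (zk_root k)) addcJ.
by rewrite !(rmorphB, rmorph1, rmorphM, fmorphV, rmorphD, rmorph_nat, rmorphXn, rmorphN1).
Qed.

(* ... and nonnegative, as Re z^k <= 1. *)
Lemma mobius_eigenvalue_ge0 k : 0 <= mobius_eigenvalue z k.
Proof.
have := root_unity_Re_le1 m_gt0 (zk_root k).
by rewrite /mobius_eigenvalue -signr_odd; case: (odd k) => /= Re_le1; lra.
Qed.

End MobiusEigenvalue.

(* The spectrum of the normalized Laplacian of M_n: it is diagonalized over
   R[i] by the Fourier matrix of z, and its eigenvalues are real. *)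
Lemma char_poly_mobius_laplacian {R : rcfType} {n : nat} {z : R[i]} :
  (3 <= n)%N -> (n + n).-primitive_root z ->
  char_poly (norm_laplacian (mobius_adj R n)) =
  \prod_(k < n + n) ('X - (mobius_eigenvalue z k)%:P).
Proof.
move=> n_ge3 prim_z; have nn_gt0 : (0 < n + n)%N by lia.
apply: (@map_poly_inj _ _ (real_complex R)).
rewrite map_char_poly rmorph_prod norm_laplacian_mobius // map_mxB map_mx1 map_mxZ.
have -> : map_mx (real_complex R) (mobius_adj R n) = mobius_adj R[i] n.
  by apply/matrixP => i j; rewrite !mxE; case: ifP; rewrite ?rmorph1 ?rmorph0.
rewrite fmorphV rmorph_nat (@char_poly_diagonalizable _ _ _ (fourier_mx (n + n) z)
  (\row_k (1 - 3%:R^-1 * mobius_symbol n z k))).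
- apply: eq_bigr => k _; rewrite mxE mobius_symbolE ?(leq_trans _ n_ge3) //.
  rewrite -(mobius_eigenvalueE nn_gt0 (prim_expr_order prim_z)).
  exact: esym (map_polyXsubC _ _).
- exact: fourier_mx_unit.
rewrite mulmxBr mulmx1 -scalemxAr fourier_mobius_adj ?prim_expr_order //.
by apply/matrixP => i j; rewrite !mul_diag_mx !mxE; ring.
Qed.

Lemma geom_sum_root_unity {F : fieldType} n (x : F) : x ^+ n = 1 -> x != 1 ->
  \sum_(j < n) x ^+ j = 0.
Proof.
move=> x_root x_neq1; have /esym/eqP := subrX1 x n.
by rewrite x_root subrr mulf_eq0 subr_eq0 (negbTE x_neq1) => /eqP.
Qed.

Lemma sum_prim_root_pow {F : fieldType} {n : nat} {w : F} (k : nat) :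
  n.-primitive_root w ->
  \sum_(j < n) (w ^+ j) ^+ k = if (k %% n == 0)%N then n%:R else 0.
Proof.
move=> prim_w; under eq_bigr => j _ do rewrite -exprM mulnC exprM.
case: ifP => k_mod.
  have -> : w ^+ k = 1 by rewrite -(prim_expr_mod prim_w) (eqP k_mod) expr0.
  by under eq_bigr do rewrite expr1n; rewrite sumr_const card_ord.
apply: geom_sum_root_unity.
  by rewrite -exprM mulnC exprM (prim_expr_order prim_w) expr1n.
by rewrite -(prim_expr_mod prim_w) -(expr0 w) (eq_prim_root_expr prim_w) mod0n modn_mod k_mod.
Qed.

Lemma prim_root_orthogonality {F : fieldType} {n : nat} {w : F} (k l : nat) :
  n.-primitive_root w -> (k < n)%N -> (l < n)%N ->
  \sum_(j < n) (w ^+ j) ^+ k * ((w ^+ j)^-1) ^+ l = if k == l then n%:R else 0.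
Proof.
move=> prim_w lt_kn lt_ln.
have w_neq0 := root_unity_neq0 (prim_order_gt0 prim_w) (prim_expr_order prim_w).
have -> : \sum_(j < n) (w ^+ j) ^+ k * ((w ^+ j)^-1) ^+ l =
    \sum_(j < n) (w ^+ k / w ^+ l) ^+ j.
  by apply: eq_bigr => j _; rewrite exprMn !exprVn -!exprM !(mulnC j).
have root_n i : (w ^+ i) ^+ n = 1.
  by rewrite -exprM mulnC exprM (prim_expr_order prim_w) expr1n.
case: eqP => [<-|ne_kl].
  rewrite mulfV ?expf_neq0 //.
  by under eq_bigr do rewrite expr1n; rewrite sumr_const card_ord.
apply: geom_sum_root_unity; first by rewrite exprMn exprVn !root_n invr1 mulr1.
rewrite (can2_eq (divfK _) (mulfK _)) ?expf_neq0 // mul1r.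
by rewrite (eq_prim_root_expr prim_w) !modn_small //; apply/eqP.
Qed.

Definition weighted_geom {F : nzRingType} n (x : F) : F := \sum_(k < n) k%:R * x ^+ k.

Lemma weighted_geom_mul {F : comNzRingType} n (x : F) :
  (1 - x) * weighted_geom n x + n%:R * x ^+ n = \sum_(k < n) x ^+ k + x ^+ n - 1.
Proof.
elim: n => [|n IHn]; first by rewrite /weighted_geom !big_ord0 mulr0 mul0r !add0r expr0 subrr.
rewrite /weighted_geom !big_ord_recr /= -/(weighted_geom n x).
transitivity ((1 - x) * weighted_geom n x + n%:R * x ^+ n + x ^+ n.+1).
  by rewrite -natr1 exprS; ring.
by rewrite IHn; ring.
Qed.

Lemma weighted_geom_root {F : fieldType} {n : nat} {x : F} : x ^+ n = 1 -> x != 1 ->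
  (1 - x) * weighted_geom n x = - n%:R.
Proof.
move=> x_root x_neq1; have := weighted_geom_mul n x.
rewrite x_root geom_sum_root_unity // mulr1 add0r subrr => /eqP.
by rewrite addr_eq0 => /eqP.
Qed.

Lemma weighted_geom_parseval {F : fieldType} {n : nat} {w : F} : n.-primitive_root w ->
  \sum_(j < n) weighted_geom n (w ^+ j) * weighted_geom n ((w ^+ j)^-1) =
  n%:R * \sum_(k < n) k%:R ^+ 2.
Proof.
move=> prim_w.
have expand j : weighted_geom n (w ^+ j) * weighted_geom n ((w ^+ j)^-1) =
    \sum_(k < n) \sum_(l < n) k%:R * l%:R * ((w ^+ j) ^+ k * ((w ^+ j)^-1) ^+ l).
  rewrite /weighted_geom mulr_suml; apply: eq_bigr => k _.
  by rewrite mulr_sumr; apply: eq_bigr => l _; ring.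
under eq_bigr do rewrite expand.
rewrite exchange_big /= mulr_sumr; apply: eq_bigr => k _.
rewrite exchange_big /=.
under eq_bigr => l _ do rewrite -mulr_sumr prim_root_orthogonality //.
rewrite (bigD1 k) //= eqxx big1 ?addr0 => [|l]; first by rewrite expr2 mulrC.
by rewrite eq_sym -val_eqE => /negbTE ->; rewrite mulr0.
Qed.

Lemma sum_nat_id {F : numFieldType} n :
  \sum_(k < n) (k%:R : F) = n%:R * (n%:R - 1) / 2%:R.
Proof.
elim: n => [|n IHn]; first by rewrite big_ord0 mulr0n !mul0r.
by rewrite big_ord_recr /= IHn -natr1; field.
Qed.

Lemma sum_nat_sqr {F : numFieldType} n :
  \sum_(k < n) (k%:R : F) ^+ 2 = n%:R * (n%:R - 1) * (2%:R * n%:R - 1) / 6%:R.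
Proof.
elim: n => [|n IHn]; first by rewrite big_ord0 mulr0n !mul0r.
by rewrite big_ord_recr /= IHn -natr1; field.
Qed.

(* Even Fourier modes.  For an n-th root of unity x != 1,
   1 - (x + x^-1 + 1)/3 = (1 - x)(1 - x^-1)/3, whose inverse is expressed
   through S_n(x) S_n(x^-1). *)
Lemma even_mode_term {F : numFieldType} n (x : F) : (0 < n)%N ->
  x ^+ n = 1 -> x != 1 ->
  (1 - 3%:R^-1 * (x + x^-1 + 1))^-1 =
  3%:R / n%:R ^+ 2 * (weighted_geom n x * weighted_geom n x^-1).
Proof.
move=> n_gt0 x_root x_neq1.
have x_neq0 := root_unity_neq0 n_gt0 x_root.
have S_x := weighted_geom_root x_root x_neq1.
have S_xV := weighted_geom_root (x := x^-1) (n := n).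
rewrite exprVn x_root invr1 invr_eq1 in S_xV; have {}S_xV := S_xV erefl x_neq1.
have : (1 - x) * weighted_geom n x != 0 by rewrite S_x oppr_eq0 pnatr_eq0 -lt0n.
rewrite mulf_eq0 negb_or => /andP [x1_neq0 Sx_neq0].
have : (1 - x^-1) * weighted_geom n x^-1 != 0 by rewrite S_xV oppr_eq0 pnatr_eq0 -lt0n.
rewrite mulf_eq0 negb_or => /andP [_ SxV_neq0].
have -> : 1 - 3%:R^-1 * (x + x^-1 + 1) = 3%:R^-1 * ((1 - x) * (1 - x^-1)).
  by field.
have -> : n%:R ^+ 2 = (1 - x) * weighted_geom n x * ((1 - x^-1) * weighted_geom n x^-1).
  by rewrite S_x S_xV mulrNN expr2.
by field; rewrite x_neq0 SxV_neq0 subr_eq0 x_neq1 Sx_neq0 x1_neq0.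
Qed.

(* The even-mode part of Kemeny's constant: sum over the n-th roots of unity
   (the root 1 contributes 0^-1 = 0). *)
Lemma even_mode_sum {F : numFieldType} {n : nat} {w : F} : n.-primitive_root w ->
  \sum_(j < n) (1 - 3%:R^-1 * (w ^+ j + (w ^+ j)^-1 + 1))^-1 = (n%:R ^+ 2 - 1) / 4%:R.
Proof.
move=> prim_w; have n_gt0 := prim_order_gt0 prim_w.
have parseval := weighted_geom_parseval prim_w.
case: n n_gt0 prim_w parseval => // m _ prim_w parseval.
rewrite big_ord_recl /= expr0 invr1 in parseval.
rewrite big_ord_recl /= expr0 invr1.
have -> : (1 - 3%:R^-1 * (1 + 1 + 1))^-1 = 0 :> F.
  by rewrite (_ : 1 - _ = 0) ?invr0 //; field.
rewrite add0r (eq_bigr (fun j : 'I_m => 3%:R / m.+1%:R ^+ 2 * (weighted_geom m.+1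
    (w ^+ bump 0 j) * weighted_geom m.+1 (w ^+ bump 0 j)^-1))) => [|j _]; last first.
  apply: even_mode_term => //.
    by rewrite -exprM mulnC exprM (prim_expr_order prim_w) expr1n.
  by rewrite -(expr0 w) (eq_prim_root_expr prim_w) /bump add1n mod0n modn_small ?ltnS.
rewrite -mulr_sumr -[X in _ * X](addKr (weighted_geom m.+1 1 * weighted_geom m.+1 1)).
have S_1 : weighted_geom m.+1 1 = \sum_(k < m.+1) k%:R :> F.
  by apply: eq_bigr => k _; rewrite expr1n mulr1.
rewrite parseval S_1.
by rewrite sum_nat_id sum_nat_sqr; field; rewrite addrC natr1 pnatr_eq0.
Qed.

Lemma inv_sub_root {F : fieldType} {n : nat} {a y : F} : y ^+ n = -1 -> a ^+ n + 1 != 0 ->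
  (a - y)^-1 = (a ^+ n + 1)^-1 * \sum_(i < n) a ^+ (n.-1 - i) * y ^+ i.
Proof.
move=> y_root a_nroot; have := subrXX a y n; rewrite y_root opprK => E.
have : (a - y) * \sum_(i < n) a ^+ (n.-1 - i) * y ^+ i != 0 by rewrite -E.
rewrite mulf_eq0 negb_or => /andP [_ sum_neq0].
by rewrite E invfM -mulrA mulVf // mulr1.
Qed.

(* The roots of y^n = -1 are z w^j; summing 1/(a - y) over them. *)
Lemma sum_inv_sub_roots {F : fieldType} n (z w a : F) :
  n.-primitive_root w -> z ^+ n = -1 -> a ^+ n + 1 != 0 ->
  \sum_(j < n) (a - z * w ^+ j)^-1 = n%:R * a ^+ n.-1 / (a ^+ n + 1).
Proof.
move=> prim_w z_root a_nroot; have n_gt0 := prim_order_gt0 prim_w.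
have y_root j : (z * w ^+ j) ^+ n = -1.
  by rewrite exprMn z_root -exprM mulnC exprM (prim_expr_order prim_w) expr1n mulr1.
under eq_bigr => j _ do rewrite (inv_sub_root (y_root j) a_nroot).
rewrite -mulr_sumr exchange_big /=.
under eq_bigr => i _ do under eq_bigr => j _ do rewrite exprMn mulrA.
under eq_bigr => i _ do rewrite -mulr_sumr (sum_prim_root_pow _ prim_w).
case: n n_gt0 {prim_w z_root a_nroot y_root} => // m _.
rewrite big_ord_recl /= big1 => [|i _].
  by rewrite subn0 expr0 mulr1 addr0 mulrC [_ * m.+1%:R]mulrC.
by rewrite /bump leq0n add1n modn_small ?ltnS ?ltn_ord //= mulr0.
Qed.

(* With p + q = 4 and pq = 1, i.e. p, q the roots of X^2 - 4X + 1:
   1 - (y + y^-1 - 1)/3 = -(y - p)(y - q)/(3y), split into partial fractions. *)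
Lemma odd_mode_term {F : numFieldType} {p q y : F} : p + q = 4%:R -> p * q = 1 ->
  y != 0 -> p - y != 0 -> q - y != 0 -> p - q != 0 ->
  (1 - 3%:R^-1 * (y + y^-1 - 1))^-1 = 3%:R / (p - q) * (p / (p - y) - q / (q - y)).
Proof.
move=> pq_sum pq_prod y_neq0 py_neq0 qy_neq0 pq_neq0.
have -> : 1 - 3%:R^-1 * (y + y^-1 - 1) = - ((p - y) * (q - y)) / (3%:R * y).
  rewrite (_ : (p - y) * (q - y) = y * y - (p + q) * y + p * q); last by ring.
  by rewrite pq_sum pq_prod; field.
by field; rewrite qy_neq0 py_neq0 pq_neq0 y_neq0.
Qed.

Lemma odd_mode_sum {F : numFieldType} {n : nat} {z w : F} (p q : F) :
  n.-primitive_root w -> z ^+ n = -1 ->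
  p + q = 4%:R -> p * q = 1 -> p ^+ n + 1 != 0 -> q ^+ n + 1 != 0 -> p - q != 0 ->
  \sum_(j < n) (1 - 3%:R^-1 * (z * w ^+ j + (z * w ^+ j)^-1 - 1))^-1 =
  3%:R * n%:R * (p ^+ n - q ^+ n) / ((p - q) * (p ^+ n + q ^+ n + 2%:R)).
Proof.
move=> prim_w z_root pq_sum pq_prod pn_neq qn_neq pq_neq0.
have n_gt0 := prim_order_gt0 prim_w.
have y_root j : (z * w ^+ j) ^+ n = -1.
  by rewrite exprMn z_root -exprM mulnC exprM (prim_expr_order prim_w) expr1n mulr1.
have not_root c j : c ^+ n + 1 != 0 -> c - z * w ^+ j != 0.
  by apply: contraNneq => /eqP; rewrite subr_eq0 => /eqP ->; rewrite y_root addNr.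
have mode j : (1 - 3%:R^-1 * (z * w ^+ j + (z * w ^+ j)^-1 - 1))^-1 =
    3%:R / (p - q) * (p / (p - z * w ^+ j) - q / (q - z * w ^+ j)).
  apply: (odd_mode_term pq_sum pq_prod _ (not_root _ _ pn_neq) (not_root _ _ qn_neq) pq_neq0).
  apply: contra_eq_neq (y_root j) => ->.
  by rewrite expr0n gtn_eqF // eq_sym oppr_eq0 oner_neq0.
under eq_bigr do rewrite mode.
rewrite -mulr_sumr sumrB -!mulr_sumr !sum_inv_sub_roots //.
have pqn : p ^+ n * q ^+ n = 1 by rewrite -exprMn pq_prod expr1n.
have -> : p ^+ n + q ^+ n + 2%:R = (p ^+ n + 1) * (q ^+ n + 1).
  by rewrite mulrDl !mulrDr pqn mul1r mulr1; rewrite -[2%N]/(1 + 1)%N natrD; ring.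
clear y_root not_root mode pqn; case: n n_gt0 prim_w z_root pn_neq qn_neq => // m _ _ _.
by rewrite /= !exprS => pn_neq qn_neq; field; rewrite pn_neq qn_neq pq_neq0.
Qed.

Lemma sum_ord_parity {V : nmodType} n (f : nat -> V) :
  \sum_(k < n + n) f k = \sum_(j < n) f (2 * j)%N + \sum_(j < n) f (2 * j).+1.
Proof.
elim: n => [|n IHn]; first by rewrite !big_ord0 addr0.
rewrite addSn addnS !big_ord_recr /= IHn mul2n -addnn.
by rewrite addrACA -!addrA; congr (_ + _); rewrite addrCA.
Qed.

Lemma mobius_roots (R : rcfType) :
  let p : R := 2 + Num.sqrt 3 in let q : R := 2 - Num.sqrt 3 in
  [/\ p + q = 4%:R, p * q = 1, 0 < p, 0 < q & p - q = 2%:R * Num.sqrt 3].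
Proof.
move=> p q; have sqrt3_sq : Num.sqrt 3 ^+ 2 = 3 :> R by rewrite sqr_sqrtr // ler0n.
have sqrt3_gt0 : 0 < Num.sqrt 3 :> R by rewrite sqrtr_gt0 ltr0n.
have sqrt3_lt2 : Num.sqrt 3 < 2 :> R by nra.
by rewrite /p /q; split; lra.
Qed.

(* Kemeny's sum over all 2n Fourier modes, in any field of characteristic 0
   containing a primitive 2n-th root of unity z: the even modes 2j are
   indexed by the n-th roots of unity w^j, w = z^2, and the odd modes 2j + 1
   by the roots z w^j of y^n = -1. *)
Lemma fourier_mode_sum {F : numFieldType} {n : nat} {z : F} (p q : F) :
  (0 < n)%N -> (n + n).-primitive_root z ->
  p + q = 4%:R -> p * q = 1 -> p ^+ n + 1 != 0 -> q ^+ n + 1 != 0 -> p - q != 0 ->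
  \sum_(k < n + n) (1 - 3%:R^-1 * (z ^+ k + (z ^+ k)^-1 + (-1) ^+ k))^-1 =
  (n%:R ^+ 2 - 1) / 4%:R +
  3%:R * n%:R * (p ^+ n - q ^+ n) / ((p - q) * (p ^+ n + q ^+ n + 2%:R)).
Proof.
move=> n_gt0 prim_z pq_sum pq_prod pn_neq qn_neq pq_neq0.
have prim_w : n.-primitive_root (z ^+ 2).
  have n_dvd : (n %| n + n)%N by rewrite dvdn_addl.
  by have := dvdn_prim_root prim_z n_dvd; rewrite addnn -mul2n mulnK.
rewrite (sum_ord_parity n (fun k => (1 - 3%:R^-1 * (z ^+ k + (z ^+ k)^-1 + (-1) ^+ k))^-1)).
under eq_bigr => j _ do rewrite !exprM sqrrN !expr1n.
under [X in _ + X]eq_bigr => j _ do rewrite !exprS !exprM sqrrN !expr1n mulr1.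
by rewrite even_mode_sum // (odd_mode_sum p q prim_w (prim_root_half n_gt0 prim_z)).
Qed.

(* The sum of the inverse eigenvalues of the normalized Laplacian of M_n, in
   the closed form of the theorem: the mode sum is computed in R[i] with the
   images of p and q, then pulled back to R. *)
Lemma mobius_inv_eigenvalue_sum {R : rcfType} {n : nat} {z : R[i]} :
  (3 <= n)%N -> (n + n).-primitive_root z ->
  let p : R := 2 + Num.sqrt 3 in let q : R := 2 - Num.sqrt 3 in
  \sum_(k < n + n) (mobius_eigenvalue z k)^-1 =
  (n%:R ^+ 2 - 1) / 4 +
  (Num.sqrt 3 * n%:R / 2) * ((p ^+ n - q ^+ n) / (p ^+ n + q ^+ n + 2)).
Proof.
move=> n_ge3 prim_z p q; have [pq_sum pq_prod p_gt0 q_gt0 pq_diff] :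
  [/\ p + q = 4%:R, p * q = 1, 0 < p, 0 < q & p - q = 2%:R * Num.sqrt 3] := mobius_roots R.
clearbody p q; have n_gt0 : (0 < n)%N by lia.
have nn_gt0 : (0 < n + n)%N by lia.
have sqrt3_neq0 : Num.sqrt 3 != 0 :> R by rewrite sqrtr_eq0 -ltNge ltr0n.
have -> : Num.sqrt 3 * n%:R / 2 * ((p ^+ n - q ^+ n) / (p ^+ n + q ^+ n + 2)) =
    3%:R * n%:R * (p ^+ n - q ^+ n) / ((p - q) * (p ^+ n + q ^+ n + 2)).
  rewrite -[X in _ = X * _ * _ / _](@sqr_sqrtr _ 3) ?ler0n // pq_diff; field.
  by rewrite sqrt3_neq0 andbT gt_eqF // !addr_gt0 ?exprn_gt0.
have nC_root (c : R) : 0 < c -> (c%:C%C) ^+ n + 1 != 0.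
  move=> c_gt0; rewrite -rmorphXn -(rmorph1 (real_complex R)) -rmorphD fmorph_eq0.
  by rewrite gt_eqF // ltr_wpDl ?exprn_ge0 ?ltW.
apply: (@complexI R); rewrite rmorph_sum.
transitivity (\sum_(k < n + n)
    (1 - 3%:R^-1 * (z ^+ k + (z ^+ k)^-1 + (-1) ^+ k))^-1).
  apply: eq_bigr => k _; rewrite -(mobius_eigenvalueE nn_gt0 (prim_expr_order prim_z)).
  exact: fmorphV.
rewrite (fourier_mode_sum p%:C%C q%:C%C n_gt0 prim_z) ?nC_root //.
- by rewrite !(rmorph_nat, rmorphN1, rmorphXn, fmorphV, rmorphM, rmorphB, rmorphD).
- by rewrite -rmorphD pq_sum rmorph_nat.
- by rewrite -rmorphM pq_prod rmorph1.
by rewrite -rmorphB fmorph_eq0 pq_diff mulf_neq0 ?pnatr_eq0.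
Qed.

(* A sorted spectrum s that is a rearrangement of a nonnegative multiset r
   containing 0 starts with its eigenvalue 0, so its Kemeny sum is the sum of
   all inverses over r (with the convention 0^-1 = 0). *)
Lemma kemeny_of_sorted_perm {R : rcfType} {s r : seq R} :
  sorted <=%R s -> perm_eq s r -> {in r, forall x, 0 <= x} -> 0 \in r ->
  kemeny_of_spectrum s = \sum_(x <- r) x^-1.
Proof.
move=> s_sorted perm_sr r_ge0 r0; rewrite -(perm_big _ perm_sr).
case: s s_sorted perm_sr => [|a s] s_sorted perm_sr.
  by rewrite -(perm_mem perm_sr) in r0.
have a0 : a = 0.
  have /orP [/eqP -> //|s0] : 0 \in a :: s by rewrite (perm_mem perm_sr).
  apply/eqP; rewrite eq_le (allP (order_path_min le_trans s_sorted)) //=.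
  by apply: r_ge0; rewrite -(perm_mem perm_sr) mem_head.
rewrite /kemeny_of_spectrum big_add1 /= big_cons a0 invr0 add0r.
by rewrite [RHS](big_nth 0) big_mkord.
Qed.

Theorem theorem4p3 (R : rcfType) (n : nat) (hn : (3 <= n)%N) :
  let p : R := 2 + Num.sqrt 3 in
  let q : R := 2 - Num.sqrt 3 in
  let L := norm_laplacian (mobius_adj R n) in
  (exists s : seq R, is_sorted_spectrum L s) /\
  (forall s : seq R, is_sorted_spectrum L s ->
     kemeny_of_spectrum s =
       ((n%:R ^+ 2 - 1) / 4 +
        (Num.sqrt 3 * n%:R / 2) * ((p ^+ n - q ^+ n) / (p ^+ n + q ^+ n + 2)))).
Proof.
move=> p q L.
have nn_gt0 : (0 < n + n)%N by lia.
have [z prim_z] := @prim_root_exists R[i] _ nn_gt0.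
pose r := [seq mobius_eigenvalue z k | k <- index_iota 0 (n + n)].
have char_L : char_poly L = \prod_(x <- r) ('X - x%:P).
  by rewrite (char_poly_mobius_laplacian hn prim_z) big_map big_mkord.
split.
  exists (sort <=%R r); split; first exact: (sort_sorted (@le_total _ R)).
  by rewrite char_L; apply: perm_big; rewrite perm_sym perm_sort.
move=> s [s_sorted char_s]; rewrite (kemeny_of_sorted_perm (r := r) s_sorted).
- by rewrite big_map big_mkord (mobius_inv_eigenvalue_sum hn prim_z).
- by apply: prod_XsubC_eq; rewrite -char_s.
- by move=> _ /mapP [k _ ->]; exact: (mobius_eigenvalue_ge0 nn_gt0 (prim_expr_order prim_z)).
apply/mapP; exists 0%N; last by rewrite mobius_eigenvalue0.
by rewrite mem_index_iota; lia.
Qed.
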